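(* Consider the autonomous system in the context, let $\bar\theta^0=(\bar F^0,\mu^0,o^0)\in\Theta$ be any initial condition, and let $o(t)=o(t;\bar\theta^0)$ be the $o$-component of its solution. Then the state $(\bar F,\mu)=(0,\mu^* )$ is a globally asymptotically stable equilibrium of the time-dependent system $$\dot{\bar F}_k=\frac1K\sum_{j}\frac{e^{\bar F_j}}{\sum_\ell\pi_\ell(\bar\theta)e^{\bar F_\ell}}-\frac{e^{\bar F_k}}{\sum_\ell\pi_\ell(\bar\theta)e^{\bar F_\ell}},\qquad \dot\mu_{km}=\frac{e^{\bar F_k}}{\sum_\ell\pi_\ell(\bar\theta)e^{\bar F_\ell}}(\mu^*_{km}-\mu_{km}),$$ where $\bar\theta=(\bar F,\mu,o(t))$, uniformly in the trajectory $o(t)$ (the time $T(\rho,\eta)$ in the definition of global asymptotic stability can be chosen independently of $o(\cdot)$).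
   Context: $K\ge2$, $M\ge1$, $\varepsilon>0$, $\mathcal{P}^\varepsilon(K)$ is the set of probability vectors on $[K]$ with entries $\ge\varepsilon$, and $O^\varepsilon=\{o\in\mathbb{R}^K_{\ge0}:\sum_ko_k\le\varepsilon^{-1}\}$. $\Theta=\mathbb{R}^K\times\mathbb{R}^{KM}\times O^\varepsilon$; $\pi:\Theta\to\mathcal P^\varepsilon(K)$ and $\gamma:\mathbb{R}^{KM}\to\mathcal P^\varepsilon(K)$ are continuously differentiable, and $\mu^*\in\mathbb{R}^{KM}$ is fixed. The autonomous system $\dot{\bar\theta}=\bar g(\bar\theta)$ is given by the two equations displayed in the claim (with $\bar\theta=(\bar F,\mu,o)$) together with $\dot o_k=\dfrac{\pi_k(\bar\theta)}{\gamma_k(\mu)}\dfrac{e^{\bar F_k}}{\sum_\ell\pi_\ell(\bar\theta)e^{\bar F_\ell}}-o_k$. Here $\bar F$ ranges over the hyperplane $\{\sum_k\bar F_k=0\}$ (representing free energies modulo additive constants, shifted so that the exact free energy is $0$), with norm $\|\bar F\|_{\mathbb L}=\|\bar F\|$; distances in $(\bar F,\mu)$ are $\|\bar F\|+\|\mu-\mu^*\|$. Global asymptotic stability of $z^*$ for $\dot z=h(z,t)$: (1) for each $\eta>0$ there is $\delta>0$ independent of $t_0$ with $|z_0-z^*|<\delta\Rightarrow|z(t;z_0,t_0)-z^*|<\eta$ for all $t\ge t_0\ge0$; (2) for all $\eta,\rho>0$ there is $T(\rho,\eta)<\infty$ independent of $t_0$ with $|z(t;z_0,t_0)-z^*|<\eta$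 for all $t\ge t_0+T$ whenever $|z_0-z^*|<\rho$. *)

From mathcomp Require Import all_boot all_order all_algebra.
From mathcomp Require Import all_classical all_reals all_analysis.
Import Order.TTheory GRing.Theory Num.Theory.
Import numFieldNormedType.Exports.
Local Open Scope ring_scope.
Local Open Scope classical_set_scope.

(* A state theta-bar = (Fbar, mu, o) in R^K x R^{K x M} x R^K.
   Components: th.1.1 = Fbar (row vector), th.1.2 = mu (K x M matrix, mu k m = mu_{km}),
   th.2 = o (row vector). *)
Definition state (R : realType) (K M : nat) : Type :=
  ('rV[R]_K * 'M[R]_(K, M) * 'rV[R]_K)%type.

Definition enorm {R : realType} {m n : nat} (A : 'M[R]_(m, n)) : R :=
  Num.sqrt (\sum_(i < m) \sum_(j < n) A i j ^+ 2).

Definition prob_eps {R : realType} {K : nat} (eps : R) (p : 'rV[R]_K) : Prop :=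
  (forall k : 'I_K, eps <= p 0 k) /\ \sum_(k < K) p 0 k = 1.

Definition in_Oeps {R : realType} {K : nat} (eps : R) (o : 'rV[R]_K) : Prop :=
  (forall k : 'I_K, 0 <= o 0 k) /\ \sum_(k < K) o 0 k <= eps^-1.

Definition in_Theta {R : realType} {K M : nat} (eps : R) (th : state R K M) : Prop :=
  in_Oeps eps th.2.

Definition in_hyper {R : realType} {K : nat} (F : 'rV[R]_K) : Prop :=
  \sum_(k < K) F 0 k = 0.

Definition C1 {R : realType} {V W : normedModType R} (f : V -> W) : Prop :=
  (forall x : V, differentiable f x) /\ (forall v : V, continuous (fun x : V => 'D_v f x)).


Section Dyn.
Context {R : realType} {K M : nat}.
Variable pi : state R K M -> 'rV[R]_K.
Variable gam : 'M[R]_(K, M) -> 'rV[R]_K.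
Variable mustar : 'M[R]_(K, M).

Definition Zden (th : state R K M) : R :=
  \sum_(l < K) pi th 0 l * expR (th.1.1 0 l).

Definition wgt (th : state R K M) (k : 'I_K) : R :=
  expR (th.1.1 0 k) / Zden th.

Definition Fdot (th : state R K M) (k : 'I_K) : R :=
  K%:R^-1 * (\sum_(j < K) wgt th j) - wgt th k.

Definition mudot (th : state R K M) (k : 'I_K) (m : 'I_M) : R :=
  wgt th k * (mustar k m - th.1.2 k m).

Definition odot (th : state R K M) (k : 'I_K) : R :=
  pi th 0 k / gam th.1.2 0 k * wgt th k - th.2 0 k.

Definition full_solution (eps : R) (th0 : state R K M) (th : R -> state R K M) : Prop :=
  th 0 = th0 /\
  (forall t, 0 <= t -> in_Theta eps (th t) /\ in_hyper (th t).1.1) /\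
  (forall k : 'I_K, {within `[0, +oo[, continuous (fun t => (th t).1.1 0 k)}) /\
  (forall (k : 'I_K) (m : 'I_M), {within `[0, +oo[, continuous (fun t => (th t).1.2 k m)}) /\
  (forall k : 'I_K, {within `[0, +oo[, continuous (fun t => (th t).2 0 k)}) /\
  (forall t : R, 0 < t ->
     (forall k : 'I_K, is_derive t 1 (fun s => (th s).1.1 0 k) (Fdot (th t) k)) /\
     (forall (k : 'I_K) (m : 'I_M), is_derive t 1 (fun s => (th s).1.2 k m) (mudot (th t) k m)) /\
     (forall k : 'I_K, is_derive t 1 (fun s => (th s).2 0 k) (odot (th t) k))).

Definition tsol (o : R -> 'rV[R]_K) (t0 : R) (z0 : 'rV[R]_K * 'M[R]_(K, M))
    (z : R -> 'rV[R]_K * 'M[R]_(K, M)) : Prop :=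
  z t0 = z0 /\ in_hyper z0.1 /\
  (forall k : 'I_K, {within `[t0, +oo[, continuous (fun t => (z t).1 0 k)}) /\
  (forall (k : 'I_K) (m : 'I_M), {within `[t0, +oo[, continuous (fun t => (z t).2 k m)}) /\
  (forall t : R, t0 < t ->
     (forall k : 'I_K, is_derive t 1 (fun s => (z s).1 0 k) (Fdot ((z t).1, (z t).2, o t) k)) /\
     (forall (k : 'I_K) (m : 'I_M),
        is_derive t 1 (fun s => (z s).2 k m) (mudot ((z t).1, (z t).2, o t) k m))).

Definition dist_eq (z : 'rV[R]_K * 'M[R]_(K, M)) : R :=
  enorm z.1 + enorm (z.2 - mustar).

End Dyn.

(* Along a solution write w_k = e^{F_k} / sum_l pi_l e^{F_l}.  The squares
   (F_i - F_j)^2 and (mu_km - mu*_km)^2 are Lyapunov functions: their derivatives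
   are -2 (F_i - F_j)(w_i - w_j) <= 0 (monotonicity of exp) and
   -2 w_k (mu_km - mu*_km)^2.  Since pi is a probability vector whatever o(t) is,
   a bound B on the initial differences, which therefore persists, gives
   w_k >= e^{-B}; by Gronwall both squares then decay at rate 2 e^{-B}, a rate
   depending only on the initial distance, not on t0 nor on o.  The sum of the
   F_k is conserved (zero), so each |F_k| is bounded by the differences.
   Smoothness of pi and gamma only matters for the existence of solutions, which
   the statement takes for granted. *)

From mathcomp Require Import all_boot all_order all_algebra.
From mathcomp Require Import all_classical all_reals all_analysis.
From mathcomp Require Import ring lra.
Import Order.TTheory GRing.Theory Num.Theory.
Import numFieldNormedType.Exports.
Local Open Scope ring_scope.

Section ExpInequalities.
Context {R : realType}.

Lemma expR_secant_ge (x y c : R) : c <= expR x -> c <= expR y ->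
  (x - y) ^+ 2 * c <= (x - y) * (expR x - expR y).
Proof.
wlog yx : x y / y <= x.
  move=> W cx cy; case: (lerP y x) => [yx|/ltW xy]; first exact: W.
  have -> : (x - y) ^+ 2 = (y - x) ^+ 2 by ring.
  have -> : (x - y) * (expR x - expR y) = (y - x) * (expR y - expR x) by ring.
  exact: W.
move=> _ cy; have xy0 : 0 <= x - y by rewrite subr_ge0.
have gap : (x - y) * expR y <= expR x - expR y.
  have ey := expR_gt0 y; have := expR_ge1Dx (x - y).
  have -> : expR x = expR (x - y) * expR y by rewrite -expRD subrK.
  nra.
have := ler_wpM2l (sqr_ge0 (x - y)) cy; have := ler_wpM2l xy0 gap; nra.
Qed.

Lemma expRN_mul_1Dx_le1 (x : R) : expR (- x) * (1 + x) <= 1.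
Proof.
rewrite -[leRHS](expRxMexpNx_1 x) [leRHS]mulrC.
by rewrite ler_pM2l ?expR_gt0 // expR_ge1Dx.
Qed.

Lemma abs_decay_of_sqr (x x0 a s : R) :
  x ^+ 2 <= x0 ^+ 2 * expR (- (2 * a) * s) -> `|x| <= `|x0| * expR (- a * s).
Proof.
move=> h; rewrite -ler_sqr ?nnegrE ?mulr_ge0 ?expR_ge0 // exprMn !real_normK ?num_real //.
by rewrite -expRM_natl mulrA mulrN.
Qed.

Lemma wsum_expR_gt0 {n} (p x : 'I_n -> R) :
  (forall l, 0 < p l) -> \sum_l p l = 1 -> 0 < \sum_l p l * expR (x l).
Proof.
case: n p x => [|n] p x p_gt0 p_sum1.
  by move: p_sum1; rewrite big_ord0 => /eqP; rewrite eq_sym oner_eq0.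
rewrite big_ord_recl ltr_pwDl ?mulr_gt0 ?expR_gt0 //.
by apply: sumr_ge0 => l _; rewrite mulr_ge0 ?expR_ge0 ?ltW.
Qed.

End ExpInequalities.

Section DifferentialInequalities.
Context {R : realType}.
Local Open Scope classical_set_scope.

Lemma is_derive_sqr {f : R -> R} {t df : R} :
  is_derive t 1 f df -> is_derive t 1 (fun s => f s ^+ 2) (2 * f t * df).
Proof.
move=> fd; apply: is_derive_eq (is_deriveX 2 fd) _.
by rewrite /GRing.scale /= expr1.
Qed.

Lemma derive_nonpos_le {g d : R -> R} {t0 : R} :
  {within `[t0, +oo[, continuous g} ->
  (forall t, t0 < t -> is_derive t 1 g (d t)) -> (forall t, t0 < t -> d t <= 0) ->
  forall t, t0 <= t -> g t <= g t0.
Proof.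
move=> gc gd dle t tt0.
apply: (ler0_derive1_nincry _ _ gc) => // s; rewrite in_itv /= andbT => st0.
  by have [] := gd s st0.
by have gs := gd s st0; rewrite derive1E derive_val; exact: dle.
Qed.

Lemma gronwall_decay {g d : R -> R} {a t0 : R} :
  {within `[t0, +oo[, continuous g} ->
  (forall t, t0 < t -> is_derive t 1 g (d t)) -> (forall t, t0 < t -> d t <= - a * g t) ->
  forall t, t0 <= t -> g t <= g t0 * expR (- a * (t - t0)).
Proof.
move=> gc gd dle t tt0.
pose e s := expR (a * (s - t0)).
have ed (s : R) : is_derive s (1 : R) e (a * e s).
  have lin : is_derive s (1 : R) (fun s => a * (s - t0)) a.
    have -> : (fun s => a * (s - t0)) = a \*: (@id R - cst t0) by apply/funext.
    by apply: is_derive_eq; rewrite subr0 /GRing.scale /= mulr1.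
  by rewrite mulrC; exact: (@is_derive1_comp _ expR _ s _ _ _ lin).
have ec : continuous e.
  by move=> x; apply/differentiable_continuous/derivable1_diffP; case: (ed x).
have ge_le : g t * e t <= g t0 * e t0.
  apply: (@derive_nonpos_le (fun s => g s * e s)
                            (fun s => g s * (a * e s) + e s * d s)) => //.
  - by move=> x; apply: cvgM; [exact: gc | exact: continuous_subspaceT].
  - by move=> s st0; exact: is_deriveM (gd s st0) (ed s).
  - by move=> s /dle st0; have := expR_gt0 (a * (s - t0)); rewrite /e; nra.
move: ge_le; rewrite /e subrr mulr0 expR0 mulr1 mulNr expRN ler_pdivlMr ?expR_gt0 //.
Qed.

End DifferentialInequalities.

Section Weights.
Context {R : realType} {K M : nat}.
Variable pi : state R K M -> 'rV[R]_K.
Context {eps : R} {th : state R K M}.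
Hypotheses (eps_gt0 : 0 < eps) (pi_th : prob_eps eps (pi th)).

Lemma Zden_gt0 : 0 < Zden pi th.
Proof.
have [pi_ge pi_sum1] := pi_th.
by apply: wsum_expR_gt0 pi_sum1 => l; exact: lt_le_trans eps_gt0 (pi_ge l).
Qed.

Lemma wgt_ge (B : R) (k : 'I_K) :
  (forall l, th.1.1 0 l - th.1.1 0 k <= B) -> expR (- B) <= wgt pi th k.
Proof.
move=> spread; have [pi_ge pi_sum1] := pi_th.
have Z_le : Zden pi th <= expR (th.1.1 0 k + B).
  rewrite -[leRHS]mul1r -pi_sum1 mulr_suml; apply: ler_sum => l _.
  apply: ler_wpM2l; first exact: le_trans (ltW eps_gt0) (pi_ge l).
  by rewrite ler_expR -lerBlDl; exact: spread.
rewrite /wgt ler_pdivlMr ?Zden_gt0 //.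
have -> : expR (th.1.1 0 k) = expR (- B) * expR (th.1.1 0 k + B).
  by rewrite -expRD addrCA addNr addr0.
by rewrite ler_pM2l ?expR_gt0.
Qed.

Lemma wgt_ge0 (k : 'I_K) : 0 <= wgt pi th k.
Proof. by rewrite /wgt divr_ge0 ?expR_ge0 ?ltW ?Zden_gt0. Qed.

End Weights.

Section EuclideanNorm.
Context {R : realType}.

Lemma enorm_ge0 {m n} (A : 'M[R]_(m, n)) : 0 <= enorm A.
Proof. exact: sqrtr_ge0. Qed.

Lemma enorm_entry {m n} (A : 'M[R]_(m, n)) i j : `|A i j| <= enorm A.
Proof.
rewrite /enorm -sqrtr_sqr ler_sqrt ?sumr_ge0 //; last first.
  by move=> *; apply: sumr_ge0 => *; rewrite sqr_ge0.
rewrite (bigD1 i) //= (bigD1 j) //= -addrA lerDl addr_ge0 //.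
  by apply: sumr_ge0 => *; rewrite sqr_ge0.
by apply: sumr_ge0 => *; apply: sumr_ge0 => *; rewrite sqr_ge0.
Qed.

Lemma enorm_le {m n} (A : 'M[R]_(m, n)) (c : R) : 0 <= c ->
  (forall i j, `|A i j| <= c) -> enorm A <= (m * n)%:R * c.
Proof.
move=> c0 Ac; set N : R := (m * n)%:R.
have N_le_sqr : N <= N ^+ 2.
  by rewrite /N -natrX ler_nat; case: (m * n)%N => // k; rewrite expnS leq_pmulr.
rewrite /enorm -[leRHS]ger0_norm ?mulr_ge0 ?ler0n // -sqrtr_sqr ler_sqrt ?sqr_ge0 //.
apply: (@le_trans _ _ (\sum_(i < m) \sum_(j < n) c ^+ 2)).
  apply: ler_sum => i _; apply: ler_sum => j _.
  by rewrite -real_normK ?num_real // lerXn2r ?nnegrE.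
rewrite !sumr_const !card_ord -mulrnA -mulr_natl mulnC -/N exprMn.
by apply: ler_wpM2r; rewrite ?sqr_ge0.
Qed.

Lemma norm_le_of_sum0 {n} (x : 'I_n -> R) (k : 'I_n) (c : R) :
  \sum_j x j = 0 -> (forall j, `|x k - x j| <= c) -> `|x k| <= c.
Proof.
move=> sum0 diff_le; case: n x k sum0 diff_le => [|n] x k; first by case: k.
move=> sum0 diff_le; have n_gt0 : 0 < n.+1%:R :> R by rewrite ltr0n.
have -> : x k = n.+1%:R^-1 * \sum_j (x k - x j).
  by rewrite sumrB sumr_const card_ord sum0 subr0 -[x k *+ _]mulr_natl mulKf // lt0r_neq0.
rewrite normrM ger0_norm ?invr_ge0 ?ler0n // ler_pdivrMl //.
apply: (le_trans (ler_norm_sum _ _ _)).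
have -> : n.+1%:R * c = \sum_(j < n.+1) c by rewrite sumr_const card_ord mulr_natl.
by apply: ler_sum => j _; exact: diff_le.
Qed.

End EuclideanNorm.

Section DistanceToEquilibrium.
Context {R : realType} {K M : nat}.
Variable mustar : 'M[R]_(K, M).
Implicit Type z : 'rV[R]_K * 'M[R]_(K, M).

Lemma dist_eq_ge0 z : 0 <= dist_eq mustar z.
Proof. by rewrite addr_ge0 ?enorm_ge0. Qed.

Lemma norm_F_le_dist_eq z k : `|z.1 0 k| <= dist_eq mustar z.
Proof. by rewrite (le_trans (enorm_entry z.1 0 k)) // lerDl enorm_ge0. Qed.

Lemma norm_mu_le_dist_eq z k m : `|z.2 k m - mustar k m| <= dist_eq mustar z.
Proof.
have := enorm_entry (z.2 - mustar) k m; rewrite !mxE => /le_trans; apply.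
by rewrite lerDr enorm_ge0.
Qed.

Lemma dist_eq_le z (c : R) : 0 <= c ->
  (forall k, `|z.1 0 k| <= c) -> (forall k m, `|z.2 k m - mustar k m| <= c) ->
  dist_eq mustar z <= (K + K * M)%:R * c.
Proof.
move=> c_ge0 F_le mu_le; rewrite natrD mulrDl -[K in K%:R * c]mul1n.
apply: lerD; apply: enorm_le => // i j; first by rewrite (ord1 i); exact: F_le.
by rewrite !mxE; exact: mu_le.
Qed.

End DistanceToEquilibrium.

(* With N = K + K M, B = 2 rho and x = e^{-B} (t - t0), waiting this long
   ensures eta x >= N B; since e^{-x} (1 + x) <= 1 this yields
   N B e^{-x} <= eta (1 - e^{-x}) < eta. *)
Definition settling_time {R : realType} (K M : nat) (rho eta : R) : R :=
  (K + K * M)%:R * (2 * rho) / (eta * expR (- (2 * rho))).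

Section TrajectoryDecay.
Context {R : realType} {K M : nat} {eps : R}.
Variable pi : state R K M -> 'rV[R]_K.
Context {mustar : 'M[R]_(K, M)} {o : R -> 'rV[R]_K}.
Context {t0 : R} {z0 : 'rV[R]_K * 'M[R]_(K, M)} {z : R -> 'rV[R]_K * 'M[R]_(K, M)}.
Hypotheses (K_gt0 : (0 < K)%N) (eps_gt0 : 0 < eps) (z_sol : tsol pi mustar o t0 z0 z).
Hypothesis pi_prob : forall t, t0 < t -> prob_eps eps (pi ((z t).1, (z t).2, o t)).
Local Open Scope classical_set_scope.

Let th t := ((z t).1, (z t).2, o t).
Let w t k := wgt pi (th t) k.
Let dF t i j := (z t).1 0 i - (z t).1 0 j.
Let dmu t k m := (z t).2 k m - mustar k m.

Lemma z_t0 : z t0 = z0.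
Proof. by case: z_sol. Qed.

Lemma F_continuous k : {within `[t0, +oo[, continuous (fun t => (z t).1 0 k)}.
Proof. by case: z_sol => _ [_ []]. Qed.

Lemma mu_continuous k m : {within `[t0, +oo[, continuous (fun t => (z t).2 k m)}.
Proof. by case: z_sol => _ [_ [_ []]]. Qed.

Lemma F_derive t k : t0 < t ->
  is_derive t 1 (fun s => (z s).1 0 k) (K%:R^-1 * \sum_j w t j - w t k).
Proof. by case: z_sol => _ [_ [_ [_ der]]] /der []. Qed.

Lemma mu_derive t k m : t0 < t ->
  is_derive t 1 (fun s => (z s).2 k m) (w t k * (mustar k m - (z t).2 k m)).
Proof. by case: z_sol => _ [_ [_ [_ der]]] /der []. Qed.

Lemma sum_F_eq0 t : t0 <= t -> \sum_k (z t).1 0 k = 0.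
Proof.
move=> tt0; pose S s := \sum_k (z s).1 0 k.
have S_cont : {within `[t0, +oo[, continuous S}.
  apply: continuous_big => //; [exact: add_continuous | move=> k _; exact: F_continuous].
have S_der s : t0 < s -> is_derive s 1 S 0.
  move=> st0; have := is_derive_sum (fun k => F_derive s k st0).
  rewrite fct_sumE => /is_derive_eq; apply.
  rewrite sumrB sumr_const card_ord -[(_ * _) *+ K]mulr_natr mulrAC mulVf ?mul1r ?subrr //.
  by rewrite pnatr_eq0 -lt0n.
have S_t0 : S t0 = 0 by rewrite /S z_t0; case: z_sol => _ [].
rewrite -/(S t) -S_t0; apply/eqP; rewrite eq_le; apply/andP; split.
  exact: (@derive_nonpos_le _ S (fun _ => 0) _ S_cont S_der _ t tt0).
rewrite -lerN2; apply: (@derive_nonpos_le _ (fun s => - S s) (fun _ => - 0)) => //.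
- by move=> x; apply: cvgN; exact: S_cont.
- by move=> s /S_der; exact: is_deriveN.
Qed.

Lemma dF_sqr_continuous i j : {within `[t0, +oo[, continuous (fun s => dF s i j ^+ 2)}.
Proof. by move=> x; apply: cvgM; apply: cvgB; apply: F_continuous. Qed.

Lemma dF_sqr_derive t i j : t0 < t ->
  is_derive t 1 (fun s => dF s i j ^+ 2) (- 2 * dF t i j * (w t i - w t j)).
Proof.
move=> tt0; have := is_derive_sqr (is_deriveB (F_derive t i tt0) (F_derive t j tt0)).
by move=> /is_derive_eq; apply; rewrite /dF !fctE; ring.
Qed.

Lemma dmu_sqr_derive t k m : t0 < t ->
  is_derive t 1 (fun s => dmu s k m ^+ 2) (- 2 * w t k * dmu t k m ^+ 2).
Proof.
move=> tt0; have mu_cst := is_derive_cst (mustar k m) t 1.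
have := is_derive_sqr (is_deriveB (mu_derive t k m tt0) mu_cst).
by move=> /is_derive_eq; apply; rewrite /dmu !fctE; ring.
Qed.

Let w_ge0 t k : t0 < t -> 0 <= w t k.
Proof. by move=> tt0; apply: (wgt_ge0 pi eps_gt0 (pi_prob t tt0)). Qed.

Lemma dF_mul_dw_ge t i j c : t0 < t -> c <= w t i -> c <= w t j ->
  dF t i j ^+ 2 * c <= dF t i j * (w t i - w t j).
Proof.
move=> tt0 ci cj; have Z_gt0 := Zden_gt0 pi eps_gt0 (pi_prob t tt0).
rewrite /w /wgt -mulrBl mulrA ler_pdivlMr // -mulrA.
by apply: expR_secant_ge; rewrite -ler_pdivlMr.
Qed.

Lemma dF_abs_nonincr t i j : t0 <= t -> `|dF t i j| <= `|dF t0 i j|.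
Proof.
move=> tt0; rewrite -ler_sqr ?nnegrE // !real_normK ?num_real //.
have dF_der s st0 := dF_sqr_derive s i j st0.
apply: (derive_nonpos_le (dF_sqr_continuous i j) dF_der _ t tt0) => s st0.
have := dF_mul_dw_ge s i j 0 st0 (w_ge0 s i st0) (w_ge0 s j st0); rewrite mulr0; nra.
Qed.

Lemma traj_wgt_ge B t k : t0 < t -> (forall i j, `|dF t0 i j| <= B) -> expR (- B) <= w t k.
Proof.
move=> tt0 dF0_le; apply: (wgt_ge pi eps_gt0 (pi_prob t tt0)) => l /=.
have := dF_abs_nonincr t l k (ltW tt0); have := dF0_le l k; rewrite /dF.
move=> + /ler_normlP [_]; lra.
Qed.

Lemma dF_abs_decay B t i j : (forall i j, `|dF t0 i j| <= B) -> t0 <= t ->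
  `|dF t i j| <= `|dF t0 i j| * expR (- expR (- B) * (t - t0)).
Proof.
move=> dF0_le tt0; apply: abs_decay_of_sqr.
have dF_der s st0 := dF_sqr_derive s i j st0.
apply: (gronwall_decay (dF_sqr_continuous i j) dF_der _ t tt0) => s st0.
have wi := traj_wgt_ge B s i st0 dF0_le; have wj := traj_wgt_ge B s j st0 dF0_le.
have := dF_mul_dw_ge s i j _ st0 wi wj; nra.
Qed.

Lemma dmu_abs_decay B t k m : (forall i j, `|dF t0 i j| <= B) -> t0 <= t ->
  `|dmu t k m| <= `|dmu t0 k m| * expR (- expR (- B) * (t - t0)).
Proof.
move=> dF0_le tt0; apply: abs_decay_of_sqr.
have dmu_cont : {within `[t0, +oo[, continuous (fun s => dmu s k m ^+ 2)}.
  by move=> x; apply: cvgM; apply: cvgB; (apply: mu_continuous || apply: cvg_cst).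
apply: (gronwall_decay dmu_cont (fun s st0 => dmu_sqr_derive s k m st0)) => // s st0.
have := ler_wpM2r (sqr_ge0 (dmu s k m)) (traj_wgt_ge B s k st0 dF0_le); nra.
Qed.

Lemma dist_eq_decay {B t : R} : 2 * dist_eq mustar z0 <= B -> t0 <= t ->
  dist_eq mustar (z t) <= (K + K * M)%:R * (B * expR (- expR (- B) * (t - t0))).
Proof.
move=> B_ge tt0; have r_ge0 := dist_eq_ge0 mustar z0.
have e_ge0 := expR_ge0 (- expR (- B) * (t - t0)).
have dF0_le i j : `|dF t0 i j| <= B.
  rewrite /dF z_t0; apply: le_trans (ler_normB _ _) _.
  by have := norm_F_le_dist_eq mustar z0 i; have := norm_F_le_dist_eq mustar z0 j; lra.
apply: dist_eq_le; first by rewrite mulr_ge0 //; lra.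
  move=> i; apply: norm_le_of_sum0 (sum_F_eq0 t tt0) _ => j.
  by apply: le_trans (dF_abs_decay B t i j dF0_le tt0) _; rewrite ler_wpM2r.
move=> k m; apply: le_trans (dmu_abs_decay B t k m dF0_le tt0) _; rewrite ler_wpM2r //.
by rewrite /dmu z_t0; have := norm_mu_le_dist_eq mustar z0 k m; lra.
Qed.

Lemma dist_eq_bounded {t : R} : t0 <= t ->
  dist_eq mustar (z t) <= (K + K * M)%:R * (2 * dist_eq mustar z0).
Proof.
move=> tt0; apply: le_trans (dist_eq_decay (lexx _) tt0) _.
rewrite ler_wpM2l ?ler0n // ler_piMr ?mulr_ge0 ?dist_eq_ge0 //.
by rewrite expR_le1 mulNr oppr_le0 mulr_ge0 ?expR_ge0 // subr_ge0.
Qed.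

Lemma dist_eq_settled {rho eta t : R} : 0 < eta -> dist_eq mustar z0 < rho ->
  t0 + settling_time K M rho eta <= t -> dist_eq mustar (z t) < eta.
Proof.
move=> eta_gt0 z0_lt tTt; set N : R := (K + K * M)%:R; set B := 2 * rho.
have N_gt0 : 0 < N by rewrite ltr0n addn_gt0 K_gt0.
have rho_gt0 : 0 < rho := le_lt_trans (dist_eq_ge0 _ _) z0_lt.
have a_gt0 : 0 < expR (- B) := expR_gt0 _.
have T_ge0 : 0 <= settling_time K M rho eta.
  by apply/ltW; rewrite /settling_time divr_gt0 ?mulr_gt0 ?expR_gt0.
have rB : 2 * dist_eq mustar z0 <= B by rewrite /B ler_pM2l // ltW.
have t0t : t0 <= t by apply: le_trans tTt; rewrite lerDl.
have := dist_eq_decay rB t0t.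
rewrite -/N mulNr; set x := expR (- B) * (t - t0); set e := expR (- x).
have NB_le : N * B <= eta * x.
  have T_le : N * B / (eta * expR (- B)) <= t - t0.
    by move: tTt; rewrite /settling_time -/N -/B; lra.
  by rewrite /x [eta * _]mulrA -ler_pdivrMl ?mulr_gt0 // mulrC.
have e_gt0 : 0 < e := expR_gt0 _.
have := expRN_mul_1Dx_le1 x; rewrite -/e => ex_le.
have := ler_wpM2r (ltW e_gt0) NB_le; nra.
Qed.

End TrajectoryDecay.

Theorem proposition1 (R : realType) (K M : nat) (hK : (2 <= K)%N) (hM : (1 <= M)%N)
  (eps : R) (heps : 0 < eps)
  (pi : state R K M -> 'rV[R]_K) (gam : 'M[R]_(K, M) -> 'rV[R]_K)
  (mustar : 'M[R]_(K, M))
  (pi_C1 : C1 pi) (gam_C1 : C1 gam)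
  (pi_range : forall th : state R K M, in_Theta eps th -> prob_eps eps (pi th))
  (gam_range : forall mu : 'M[R]_(K, M), prob_eps eps (gam mu)) :
  (* (1) uniform (in t0) stability, for every trajectory o(.) of the full system *)
  (forall (th0 : state R K M) (th : R -> state R K M),
     in_Theta eps th0 -> in_hyper th0.1.1 ->
     full_solution pi gam mustar eps th0 th ->
     forall eta : R, 0 < eta ->
     exists delta : R, 0 < delta /\
       forall (t0 : R) (z0 : 'rV[R]_K * 'M[R]_(K, M)) (z : R -> 'rV[R]_K * 'M[R]_(K, M)),
         0 <= t0 -> tsol pi mustar (fun t => (th t).2) t0 z0 z ->
         dist_eq mustar z0 < delta ->
         forall t : R, t0 <= t -> dist_eq mustar (z t) < eta)
  /\
  (* (2) uniform attractivity, with T independent of t0 and of the trajectory o(.) *)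
  (forall eta rho : R, 0 < eta -> 0 < rho ->
     exists T : R,
       forall (th0 : state R K M) (th : R -> state R K M),
         in_Theta eps th0 -> in_hyper th0.1.1 ->
         full_solution pi gam mustar eps th0 th ->
         forall (t0 : R) (z0 : 'rV[R]_K * 'M[R]_(K, M)) (z : R -> 'rV[R]_K * 'M[R]_(K, M)),
           0 <= t0 -> tsol pi mustar (fun t => (th t).2) t0 z0 z ->
           dist_eq mustar z0 < rho ->
           forall t : R, t0 + T <= t -> dist_eq mustar (z t) < eta).
Proof.
have K_gt0 : (0 < K)%N by apply: leq_trans hK.
have N_gt0 : 0 < (K + K * M)%:R :> R by rewrite ltr0n addn_gt0 K_gt0.
have pi_prob th0 th t0 (z : R -> 'rV[R]_K * 'M[R]_(K, M)) :
    full_solution pi gam mustar eps th0 th -> 0 <= t0 ->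
    forall t, t0 < t -> prob_eps eps (pi ((z t).1, (z t).2, (th t).2)).
  move=> [_ [th_in _]] t0_ge0 t t0t; apply: pi_range.
  by have [] := th_in t (le_trans t0_ge0 (ltW t0t)).
split=> [th0 th _ _ th_sol eta eta_gt0 | eta rho eta_gt0 _].
  exists (eta / (2 * (K + K * M)%:R)).
  split=> [|t0 z0 z t0_ge0 z_sol z0_lt t t0t]; first by rewrite divr_gt0 ?mulr_gt0.
  have := dist_eq_bounded pi K_gt0 heps z_sol (pi_prob th0 th t0 z th_sol t0_ge0) t0t.
  by move: z0_lt; rewrite ltr_pdivlMr ?mulr_gt0 //; nra.
exists (settling_time K M rho eta) => th0 th _ _ th_sol t0 z0 z t0_ge0 z_sol z0_lt t.
exact: (dist_eq_settled pi K_gt0 heps z_sol (pi_prob th0 th t0 z th_sol t0_ge0) eta_gt0 z0_lt).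
Qed.
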